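(* Let $L \geq 2$, $m = L+1$, $\gamma = (L+1)^3$, and for $i \in \{0,\ldots,L\}$, $k\in[m]$ let $\pi_i(A_k) = w_i(k)/\sum_{h=1}^m w_i(h)$ with $w_i(k) = \gamma^{2(i+1)k - k^2+1} + \sum_{r=0}^L\gamma^{(2r+1)(i+1)-r^2-r}$. Let $\overline{\pi}(\xi) = \prod_{i=0}^L \pi_i(A_{\xi_i})$ for $\xi\in[m]^{L+1}$, let $\lambda = (1, 2, \ldots, m)$ (i.e. $\lambda_i = i+1$), let $\mathcal{X}_\lambda$ be the set of states reachable from $\lambda$ by finitely many swaps of adjacent levels, and $\overline{\pi}_\lambda = \overline{\pi}/\overline{\pi}(\mathcal{X}_\lambda)$ on $\mathcal{X}_\lambda$. Let $S \subseteq \mathcal{X}_\lambda$ be the set of states $\xi$ for which there is a sequence $\lambda = \tau^0, \ldots, \tau^N = \xi$, each obtained from the previous by swapping the entries of two adjacent levels, such that every $\tau^s$ differs from $\lambda$ in at most $\lfloor\log_2 L\rfloor - 1$ coordinates. Then $\overline{\pi}_\lambda(S) > \frac{1}{2e}$.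
   Context: A swap of adjacent levels maps $\xi$ to $(j-1,j)\xi$, the vector with entries at positions $j-1$ and $j$ exchanged, $j\in\{1,\ldots,L\}$. Two states differ in coordinate $\ell$ if their $\ell$-th entries are unequal. *)

From HB Require Import structures.
From mathcomp Require Import all_boot all_order all_algebra all_fingroup.
From mathcomp Require Import all_classical all_reals all_analysis.
Set Implicit Arguments. Unset Strict Implicit. Unset Printing Implicit Defensive.
Import Order.TTheory GRing.Theory Num.Theory.
Local Open Scope ring_scope.

(* Levels are 0..L (type 'I_L.+1).  There are m = L+1 values; the value
   k in [m] = {1,..,m} is represented by the ordinal k-1 : 'I_L.+1. *)
Definition state (L : nat) := {ffun 'I_L.+1 -> 'I_L.+1}.

Section Defs.
Variable R : realType.
Variable L : nat.

Definition gamma : R := ((L.+1) ^ 3)%:R.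

Definition w (i k : nat) : R :=
  gamma ^ ((2 * (i + 1) * k)%:Z - (k ^ 2)%:Z + 1)
  + \sum_(r < L.+1) gamma ^ (((2 * r + 1) * (i + 1))%:Z - (r ^ 2)%:Z - r%:Z).

Definition pi_ (i k : nat) : R := w i k / \sum_(h < L.+1) w i h.+1.

Definition pibar (xi : state L) : R := \prod_(i < L.+1) pi_ i (xi i).+1.

(* lambda_i = i+1, i.e. the ordinal i *)
Definition lambda : state L := [ffun i => i].

Definition swap (j : 'I_L.+1) (xi : state L) : state L :=
  [ffun l => xi (tperm (inord j.-1 : 'I_L.+1) j l)].

Definition swap_step : rel (state L) :=
  fun xi zeta => [exists j : 'I_L.+1, (0 < j)%N && (zeta == swap j xi)].

Definition Xlambda : {set state L} := [set xi | connect swap_step lambda xi].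

Definition ndiff (xi zeta : state L) : nat := #|[set l | xi l != zeta l]|.

Definition Kbound : nat := (trunc_log 2 L).-1.

Definition inS (xi : state L) : Prop :=
  exists p : seq (state L),
    [/\ path swap_step lambda p, last lambda p = xi
      & all (fun tau => (ndiff tau lambda <= Kbound)%N) (lambda :: p)].

Definition pibar_lambda_S : R :=
  (\sum_(xi : state L | `[< inS xi >]) pibar xi)
  / (\sum_(xi in Xlambda) pibar xi).
End Defs.

From Pilot Require Import Defs.
From HB Require Import structures.
From mathcomp Require Import all_boot all_order all_algebra all_fingroup.
From mathcomp Require Import all_classical all_reals all_analysis.
From mathcomp Require Import zify lra.
Import Order.TTheory GRing.Theory Num.Theory.
Local Open Scope ring_scope.

(* The bound already holds for the single state lambda.  At level i the weight
   w_i(i+1) contains gamma^((i+1)^2+1), while every other weight w_i(k) is at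
   most (L+2) gamma^((i+1)^2); as gamma = (L+1)^3 this gives
   pi_i(A_(i+1)) >= (L+1)/(L+2), hence
   pibar(lambda) >= ((L+1)/(L+2))^(L+1) >= 1/e.  Since lambda is in S and
   pibar is a probability on all states, pibar_lambda(S) >= pibar(lambda). *)

Lemma offpeak_exponent_le (i k : nat) : k <> i.+1 ->
  (2 * (i + 1) * k)%:Z - (k ^ 2)%:Z + 1 <= ((i + 1) ^ 2)%:Z :> int.
Proof.
(* the difference is (i+1-k)^2 - 1 *)
by move=> ne_ki; case: (leqP k i) => ?; nia.
Qed.

Lemma base_exponent_le (i r : nat) :
  ((2 * r + 1) * (i + 1))%:Z - (r ^ 2)%:Z - r%:Z <= ((i + 1) ^ 2)%:Z :> int.
Proof.
(* the difference is (i+1-r)(i-r), a product of consecutive integers *)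
by case: (leqP r i) => ?; nia.
Qed.

Lemma exprn_le_expR (R : realType) (x : R) (n : nat) :
  0 <= 1 + x -> (1 + x) ^+ n <= expR (n%:R * x).
Proof.
move=> x_ge; rewrite expRM_natl.
by apply: lerXn2r; rewrite ?nnegrE ?expR_ge0 ?expR_ge1Dx.
Qed.

Lemma expRN1_le_ratio_exprn (R : realType) (n : nat) :
  expR (-1) <= ((n.+1)%:R / (n.+2)%:R) ^+ n.+1 :> R.
Proof.
have n1_gt0 : 0 < (n.+1)%:R :> R by rewrite ltr0n.
have inv_ratio : (n.+2)%:R / (n.+1)%:R = 1 + (n.+1)%:R^-1 :> R.
  by rewrite -[(n.+2)%:R]natr1 mulrDl mul1r divff ?gt_eqF.
have ratio_le_e : ((n.+2)%:R / (n.+1)%:R) ^+ n.+1 <= expR 1 :> R.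
  rewrite inv_ratio -[X in expR X](divff (lt0r_neq0 n1_gt0)).
  by apply: exprn_le_expR; rewrite addr_ge0 ?invr_ge0 ?ltW.
by rewrite expRN -invf_div exprVn lef_pV2 ?posrE ?expR_gt0 ?exprn_gt0.
Qed.

Section Weights.
Variables (R : realType) (L : nat).

Local Notation gamma := (gamma R L).
Local Notation w := (w R L).
Local Notation pi_ := (pi_ R L).

Let scale (i : nat) : R := gamma ^ ((i + 1) ^ 2)%:Z.
Let base (i : nat) : R :=
  \sum_(r < L.+1) gamma ^ (((2 * r + 1) * (i + 1))%:Z - (r ^ 2)%:Z - r%:Z).

Lemma gamma_ge1 : 1 <= gamma.
Proof. by rewrite /gamma ler1n expn_gt0. Qed.

Lemma gamma_gt0 : 0 < gamma.
Proof. exact: lt_le_trans gamma_ge1. Qed.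

Lemma base_ge0 i : 0 <= base i.
Proof. by apply: sumr_ge0 => r _; rewrite exprz_ge0 ?ltW ?gamma_gt0. Qed.

Lemma base_le i : base i <= (L.+1)%:R * scale i.
Proof.
have -> : (L.+1)%:R * scale i = \sum_(r < L.+1) scale i.
  by rewrite sumr_const card_ord mulr_natl.
apply: ler_sum => r _.
exact: ler_weXz2l gamma_ge1 _ _ (base_exponent_le i r).
Qed.

Lemma w_ge0 i k : 0 <= w i k.
Proof. by rewrite addr_ge0 ?base_ge0 ?exprz_ge0 ?ltW ?gamma_gt0. Qed.

Lemma w_offpeak_le i k : k <> i.+1 -> w i k <= (L.+2)%:R * scale i.
Proof.
move=> ne_ki; rewrite -natr1 mulrDl mul1r addrC.
apply: lerD; last exact: base_le.
rewrite /scale; exact: ler_weXz2l gamma_ge1 _ _ (offpeak_exponent_le _ _ ne_ki).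
Qed.

Lemma w_peak_ge i : gamma * scale i <= w i i.+1.
Proof.
have peak_exponent :
    (2 * (i + 1) * i.+1)%:Z - (i.+1 ^ 2)%:Z + 1 = ((i + 1) ^ 2)%:Z + 1 :> int.
  by lia.
rewrite /Defs.w peak_exponent.
by rewrite /scale expfzDr ?gt_eqF ?gamma_gt0 // expr1z mulrC lerDl base_ge0.
Qed.

Lemma w_peak_gt0 i : 0 < w i i.+1.
Proof.
by apply: lt_le_trans (w_peak_ge i); rewrite mulr_gt0 ?exprz_gt0 ?gamma_gt0.
Qed.

Lemma offpeak_sum_le_peak (i : 'I_L.+1) :
  (L.+1)%:R * \sum_(h < L.+1 | h != i) w i h.+1 <= w i i.+1.
Proof.
have offpeak_sum :
    \sum_(h < L.+1 | h != i) w i h.+1 <= L%:R * ((L.+2)%:R * scale i).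
  apply: le_trans (_ : \sum_(h < L.+1 | h != i) (L.+2)%:R * scale i <= _).
    apply: ler_sum => h ne_hi; apply: w_offpeak_le => /succn_inj/val_inj eq_hi.
    by rewrite eq_hi eqxx in ne_hi.
  by rewrite sumr_const (cardC1 i) card_ord /= [in X in _ <= X]mulr_natl.
apply: le_trans (w_peak_ge i); rewrite /gamma natrX.
have scale_gt0 : 0 < scale i by rewrite exprz_gt0 ?gamma_gt0.
have cube_bound : (L.+1)%:R * (L%:R * ((L.+2)%:R * scale i))
                  <= (L.+1)%:R ^+ 3 * scale i :> R.
  rewrite -!natr1; set l : R := L%:R; have : 0 <= l by rewrite ler0n.
  by nra.
by apply: le_trans cube_bound; rewrite ler_wpM2l.
Qed.

Lemma pi_peak_ge (i : 'I_L.+1) : (L.+1)%:R / (L.+2)%:R <= pi_ i i.+1.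
Proof.
have q_le := offpeak_sum_le_peak i; rewrite /Defs.pi_ (bigD1 i) //=.
have p_gt0 := w_peak_gt0 i.
have q_ge0 : 0 <= \sum_(h < L.+1 | h != i) w i h.+1.
  by rewrite sumr_ge0 // => h _; exact: w_ge0.
set p := w i i.+1 in p_gt0 q_le *.
set q := \sum_(h < L.+1 | h != i) w i h.+1 in q_ge0 q_le *.
have pq_gt0 : 0 < p + q by lra.
rewrite ler_pdivlMr // mulrAC ler_pdivrMr ?ltr0n //.
by rewrite -!natr1; lra.
Qed.

Lemma pi_ge0 i k : 0 <= pi_ i k.
Proof. by rewrite divr_ge0 ?w_ge0 ?sumr_ge0 // => h _; exact: w_ge0. Qed.

Lemma sum_pi (i : 'I_L.+1) : \sum_(k < L.+1) pi_ i k.+1 = 1.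
Proof.
rewrite -mulr_suml divff // gt_eqF // (bigD1 i) //=.
apply: lt_le_trans (w_peak_gt0 i) _.
by rewrite lerDl sumr_ge0 // => h _; exact: w_ge0.
Qed.

End Weights.

Section Pibar.
Variables (R : realType) (L : nat).

Local Notation pibar := (@pibar R L).

Lemma pibar_ge0 xi : 0 <= pibar xi.
Proof. by rewrite prodr_ge0 // => i _; exact: pi_ge0. Qed.

Lemma sum_pibar : \sum_(xi : state L) pibar xi = 1.
Proof.
rewrite /Defs.pibar -(bigA_distr_bigA (fun i j : 'I_L.+1 => pi_ R L i j.+1)) /=.
by rewrite big1 // => i _; exact: sum_pi.
Qed.

Lemma pibar_le_psum (P : pred (state L)) xi :
  P xi -> pibar xi <= \sum_(zeta | P zeta) pibar zeta.
Proof.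
move=> Pxi; rewrite (bigD1 xi) //= lerDl.
by rewrite sumr_ge0 // => zeta _; exact: pibar_ge0.
Qed.

Lemma psum_pibar_le1 (P : pred (state L)) : \sum_(xi | P xi) pibar xi <= 1.
Proof.
rewrite -sum_pibar [X in _ <= X](bigID P) /= lerDl.
by rewrite sumr_ge0 // => xi _; exact: pibar_ge0.
Qed.

Lemma pibar_lambda_ge : expR (-1) <= pibar (lambda L).
Proof.
apply: le_trans (expRN1_le_ratio_exprn R L) _.
set c : R := (L.+1)%:R / (L.+2)%:R.
have -> : c ^+ L.+1 = \prod_(i < L.+1) c by rewrite prodr_const card_ord.
apply: ler_prod => i _; rewrite divr_ge0 ?ler0n //= ffunE.
exact: pi_peak_ge.
Qed.

Lemma ndiffxx (xi : state L) : ndiff xi xi = 0%N.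
Proof.
by apply/eqP; rewrite cards_eq0; apply/eqP/setP => l; rewrite !inE eqxx.
Qed.

Lemma lambda_inS : inS (lambda L).
Proof. by exists [::]; split => //=; rewrite ndiffxx. Qed.

End Pibar.

(* The bound holds for every L. *)
Theorem lemma13 (R : realType) (L : nat) (hL : (2 <= L)%N) :
  1 / (2 * expR 1) < pibar_lambda_S R L.
Proof.
have lambda_ge := pibar_lambda_ge R L.
have lambda_le_S :
    pibar R (lambda L) <= \sum_(xi : state L | `[< inS xi >]) pibar R xi.
  by apply: pibar_le_psum; exact/asboolP/lambda_inS.
have lambda_le_X : pibar R (lambda L) <= \sum_(xi in Xlambda L) pibar R xi.
  by apply: pibar_le_psum; rewrite inE connect0.
have X_le1 : \sum_(xi in Xlambda L) pibar R xi <= 1 by exact: psum_pibar_le1.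
rewrite /pibar_lambda_S.
set S := \sum_(xi | _) _ in lambda_le_S *.
set X := \sum_(xi in _) _ in lambda_le_X X_le1 *.
have X_gt0 : 0 < X.
  by apply: lt_le_trans lambda_le_X; apply: lt_le_trans lambda_ge.
have S_le : S <= S / X.
  rewrite ler_peMr ?invf_ge1 //.
  by apply: le_trans lambda_le_S; exact: pibar_ge0.
apply: lt_le_trans S_le; apply: lt_le_trans lambda_le_S.
apply: lt_le_trans lambda_ge.
have inv_e_gt0 : 0 < (expR 1)^-1 :> R by rewrite invr_gt0 expR_gt0.
by rewrite expRN mul1r invfM; lra.
Qed.
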